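(* Let $r\ge 4$ and let $w:E(K_r)\to\mathbb{R}_{>0}$ be a positive edge-weighting of the complete graph $K_r$ on vertex set $U$. For each edge $e$ let $C_w(e)$ be the maximum of $w(C)=\sum_{f\in E(C)}w(f)$ over all cycles $C$ of $K_r$ containing $e$. Then $$\sum_{e\in E(K_r)}\frac{w(e)}{C_w(e)}=\frac{r-1}{2}$$ holds if and only if $w$ is vertex-induced, i.e. there exists $a:U\to\mathbb{R}_{\ge 0}$ with $w(uv)=\frac{a(u)+a(v)}{2}$ for all edges $uv$. In this case, $C_w(e)=\sum_{v\in U}a(v)$ for all $e\in E(K_r)$. *)

From HB Require Import structures.
From mathcomp Require Import all_boot all_order all_algebra all_fingroup.
From mathcomp Require Import reals.
Set Implicit Arguments. Unset Strict Implicit. Unset Printing Implicit Defensive.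
Import Order.TTheory GRing.Theory Num.Theory.
Local Open Scope ring_scope.

(* The complete graph K_r on a finite vertex set U: its edges are the
   2-element subsets of U.  An edge-weighting is a function
   w : {set U} -> R (only its values on 2-sets matter). *)
Definition is_edge (U : finType) (e : {set U}) : bool := #|e| == 2%N.

Definition is_cycle (U : finType) (s : seq U) : bool := uniq s && (3 <= size s)%N.

Definition cycle_edges (U : finType) (s : seq U) : seq {set U} :=
  [seq [set p.1; p.2] | p <- zip s (rot 1 s)].

Definition cycle_weight (R : realType) (U : finType) (w : {set U} -> R)
  (s : seq U) : R := \sum_(e <- cycle_edges s) w e.

(* Every cycle (as a
   duplicate-free sequence of length k) is the length-k prefix of some
   permutation of the enumeration of U, so we maximise over these. *)
Definition Cw (R : realType) (U : finType) (w : {set U} -> R) (e : {set U}) : R :=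
  \big[Num.max/0]_(p : {perm U})
   \big[Num.max/0]_(k < #|U|.+1 |
        is_cycle (take k (map p (enum U))) &&
        (e \in cycle_edges (take k (map p (enum U)))))
     cycle_weight w (take k (map p (enum U))).

Definition induced_by (R : realType) (U : finType) (w : {set U} -> R) (a : U -> R) : Prop :=
  (forall v, 0 <= a v) /\ (forall u v, u != v -> w [set u; v] = (a u + a v) / 2).

Definition vertex_induced (R : realType) (U : finType) (w : {set U} -> R) : Prop :=
  exists a : U -> R, induced_by w a.

From HB Require Import structures.
From mathcomp Require Import all_boot all_order all_algebra all_fingroup.
From mathcomp Require Import reals.
From mathcomp Require Import lra zify.
Import Order.TTheory GRing.Theory Num.Theory.
Local Open Scope ring_scope.
Set Implicit Arguments. Unset Strict Implicit. Unset Printing Implicit Defensive.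

(* For a Hamiltonian cycle H through an edge e we have w(H) <= C_w(e), so the
   ratios w(e)/C_w(e) along H sum to at most 1.  Every edge lies on equally many
   of the Hamiltonian cycles indexed by the permutations of U, so averaging over
   them bounds the sum over all edges by (r-1)/2, with equality iff C_w(e) = w(H)
   whenever e lies on H.  Then the Hamiltonian cycles x y u v ... and x u y v ...
   share the edge yu and have equal weight, which is the four-point condition
   w(xy) + w(uv) = w(xu) + w(yv).  It makes a(x) = w(xy) + w(xz) - w(yz)
   independent of y and z, and a induces w.  Finally a(x) >= 0 because the cycle
   through the r - 1 >= 3 other vertices weighs at most C_w(e) = sum_v a(v).
   Conversely, for induced weights a cycle weighs the sum of a over its vertices,
   so C_w(e) = sum_v a(v) = w(H) for every Hamiltonian cycle H. *)

Section CycleEdges.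
Variable U : finType.
Implicit Types (s t : seq U) (e : {set U}).

Lemma zip_rot1_neq s : uniq s -> (1 < size s)%N ->
  {in zip s (rot 1 s), forall pr, pr.1 != pr.2}.
Proof.
case: s => [//|x0 s'] us ns pr /(nthP (x0, x0))[i].
rewrite size_zip size_rot minnn => lt_i <-; rewrite nth_zip ?size_rot //=.
rewrite nth_cat size_drop nth_drop; case: ifP => lt_i1.
  by rewrite nth_uniq //; move: lt_i1 => /=; lia.
rewrite /= take0 [X in _ != X](_ : _ = nth x0 (x0 :: s') 0); last first.
  by case: (i - _)%N => [|k]; rewrite //= nth_nil.
by rewrite nth_uniq //; move/negbT: lt_i1 ns => /=; lia.
Qed.

Lemma cycle_edge_is_edge s e : uniq s -> (1 < size s)%N ->
  e \in cycle_edges s -> is_edge e.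
Proof.
by move=> us ns /mapP[pr /(zip_rot1_neq us ns) neq ->]; rewrite /is_edge cards2 neq.
Qed.

Lemma size_cycle_edges s : size (cycle_edges s) = size s.
Proof. by rewrite size_map size_zip size_rot minnn. Qed.

Lemma mem_cycle_edges_head x y t : [set x; y] \in cycle_edges [:: x, y & t].
Proof. by rewrite inE eqxx. Qed.

Lemma cycle_edges_map (V : finType) (f : U -> V) s :
  cycle_edges (map f s) = [seq f @: e | e <- cycle_edges s].
Proof.
rewrite /cycle_edges -map_rot -map_comp.
elim: s (rot 1 s) => [|x s IH] [|y t] //=.
by rewrite IH imsetU1 imset_set1.
Qed.

End CycleEdges.

Section HamiltonianCycles.
Variable U : finType.
Implicit Types (s t : seq U) (e : {set U}) (p q : {perm U}).

Definition ham_cycle (p : {perm U}) : seq U := map p (enum U).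

Lemma ham_cycle_uniq p : uniq (ham_cycle p).
Proof. by rewrite map_inj_uniq ?enum_uniq //; apply: perm_inj. Qed.

Lemma size_ham_cycle p : size (ham_cycle p) = #|U|.
Proof. by rewrite size_map cardE. Qed.

Lemma ham_cycleM p q : ham_cycle (p * q) = map q (ham_cycle p).
Proof. by rewrite /ham_cycle -map_comp; apply: eq_map => x; rewrite /= permM. Qed.

Lemma big_ham_cycle (V : nmodType) p (F : U -> V) :
  \sum_(v <- ham_cycle p) F v = \sum_v F v.
Proof.
by rewrite big_map big_enum [RHS](reindex_inj (@perm_inj _ p)).
Qed.

Lemma ham_cycle_surj s : uniq s -> size s = #|U| -> exists p, ham_cycle p = s.
Proof.
move=> us ns; case def_e: (enum U) => [|x0 e'].
  by exists 1%g; move: ns; rewrite /ham_cycle def_e cardE def_e => /size0nil ->.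
pose f u := nth x0 s (index u (enum U)).
have lt_index u : (index u (enum U) < size s)%N by rewrite ns cardE index_mem mem_enum.
have f_inj : injective f.
  move=> u v /eqP; rewrite /f nth_uniq // => /eqP/(congr1 (nth x0 (enum U))).
  by rewrite !nth_index ?mem_enum.
exists (perm f_inj); apply: (@eq_from_nth _ x0); first by rewrite size_ham_cycle.
move=> i; rewrite size_ham_cycle cardE => lt_i.
by rewrite (nth_map x0) // permE /f index_uniq ?enum_uniq.
Qed.

Lemma ham_cycle_prefix t : uniq t -> exists p rest, ham_cycle p = t ++ rest.
Proof.
move=> ut; set rest := [seq z <- enum U | z \notin t].
have ut_rest : uniq (t ++ rest).
  rewrite cat_uniq ut filter_uniq ?enum_uniq // andbT.
  by apply/hasPn => z; rewrite mem_filter => /andP[].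
have /perm_size : perm_eq (t ++ rest) (enum U).
  apply: uniq_perm; rewrite ?enum_uniq // => z.
  by rewrite mem_enum mem_cat mem_filter mem_enum andbT orbN.
rewrite -cardE => /(ham_cycle_surj ut_rest)[p def_p].
by exists p, rest.
Qed.

Lemma ham_cycle_through e : is_edge e -> exists p, e \in cycle_edges (ham_cycle p).
Proof.
case/cards2P=> x [y [neq_xy ->]]; have [|p [rest def_p]] := @ham_cycle_prefix [:: x; y].
  by rewrite /= inE neq_xy.
by exists p; rewrite def_p mem_cycle_edges_head.
Qed.

Lemma edge_transitive e e' : is_edge e -> is_edge e' ->
  exists q : {perm U}, q @: e = e'.
Proof.
case/cards2P=> x [y [neq_xy ->]] /cards2P[x' [y' [neq_xy' ->]]].
have [|p [rest def_p]] := @ham_cycle_prefix [:: x; y]; first by rewrite /= inE neq_xy.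
have [|q [rest' def_q]] := @ham_cycle_prefix [:: x'; y'].
  by rewrite /= inE neq_xy'.
move: def_p def_q; rewrite /ham_cycle.
case: (enum U) => [|u0 [|u1 us]] // [px py _] [qx qy _].
by exists (p^-1 * q)%g; rewrite imsetU1 imset_set1 !permM -px -py !permK qx qy.
Qed.

Definition ham_edge_count e : nat :=
  \sum_(p : {perm U}) count_mem e (cycle_edges (ham_cycle p)).

Lemma ham_edge_count_imset q e : ham_edge_count (q @: e) = ham_edge_count e.
Proof.
rewrite /ham_edge_count (reindex_inj (mulIg q)) /=; apply: eq_bigr => p _.
rewrite ham_cycleM cycle_edges_map count_map; apply: eq_count => A /=.
by rewrite (inj_eq (imset_inj perm_inj)).
Qed.

Lemma ham_edge_count_edge e e' : is_edge e -> is_edge e' ->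
  ham_edge_count e = ham_edge_count e'.
Proof.
by move=> edge_e /(edge_transitive edge_e)[q <-]; rewrite ham_edge_count_imset.
Qed.

Lemma big_seq_count (V : nmodType) (T : finType) (s : seq T) (F : T -> V) :
  \sum_(x <- s) F x = \sum_y F y *+ count_mem y s.
Proof.
elim: s => [|x s IH]; first by rewrite big_nil big1.
rewrite big_cons IH (bigD1 x) //= [RHS](bigD1 x) //= eqxx mulrS addrA; congr (_ + _).
by apply: eq_bigr => y /negbTE; rewrite eq_sym => ->.
Qed.

Lemma is_cycle_ham_cycle p : (2 < #|U|)%N -> is_cycle (ham_cycle p).
Proof. by rewrite /is_cycle ham_cycle_uniq size_ham_cycle. Qed.

Lemma exists_third (u v : U) : (2 < #|U|)%N -> exists z, (z != u) && (z != v).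
Proof.
move=> U3; have : (0 < #|~: [set u; v]|)%N.
  by rewrite cardsCs setCK subn_gt0 (leq_ltn_trans (leq_card_setU _ _)) // !cards1.
by case/card_gt0P=> z; rewrite !inE negb_or; exists z.
Qed.

Section DoubleCounting.
Hypothesis U2 : (1 < #|U|)%N.

Lemma sum_ham_cycle_edges (V : nmodType) (F : {set U} -> V) e0 : is_edge e0 ->
  \sum_p \sum_(e <- cycle_edges (ham_cycle p)) F e
    = (\sum_(e | is_edge e) F e) *+ ham_edge_count e0.
Proof.
move=> edge_e0; under eq_bigr do rewrite big_seq_count.
rewrite exchange_big /=; under eq_bigr do rewrite sumrMnr.
rewrite (bigID (@is_edge U)) /= [X in _ + X]big1 ?addr0 => [|e non_edge]; last first.
  rewrite big1 ?mulr0n // => p _; apply/count_memPn; apply: contraNN non_edge.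
  by apply: cycle_edge_is_edge; rewrite ?ham_cycle_uniq ?size_ham_cycle.
rewrite -sumrMnl; apply: eq_bigr => e edge_e.
by rewrite -(ham_edge_count_edge edge_e edge_e0).
Qed.

Lemma ham_edge_count_mul e0 : is_edge e0 ->
  (ham_edge_count e0 * #|U|.-1 = 2 * #|{perm U}|)%N.
Proof.
move=> edge_e0; have := sum_ham_cycle_edges (fun=> 1%N) edge_e0.
under eq_bigr do rewrite sum1_size size_cycle_edges size_ham_cycle.
rewrite sum_nat_const sum1_card -mulr_natr natn.
have -> : #|[pred A : {set U} | is_edge A]| = 'C(#|U|, 2).
  by rewrite -card_draws; apply: eq_card => A; rewrite inE.
have := bin_ffact #|U| 2; rewrite ffactnS ffactn1 /= -/#|{perm U}|.
move: (ham_edge_count e0) #|{perm U}| ('C(#|U|, 2)) => N P C.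
rewrite (_ : 2`! = 2%N) // -[C * N]/(C * N)%N => bin2E cntE; apply/eqP.
rewrite -(@eqn_pmul2r #|U|) ?(ltnW U2) //; apply/eqP.
by rewrite -mulnA (mulnC #|U|.-1) -bin2E -mulnA cntE mulnCA mulnA mulnC.
Qed.
End DoubleCounting.
End HamiltonianCycles.

Section MaxCycleWeight.
Variables (R : realType) (U : finType) (w : {set U} -> R).
Implicit Types (s : seq U) (e : {set U}) (p : {perm U}) (a : U -> R).

Lemma cycle_weight_le_Cw s e : is_cycle s -> e \in cycle_edges s ->
  cycle_weight w s <= Cw w e.
Proof.
move=> cyc_s e_s; have [p [rest def_p]] := ham_cycle_prefix (andP cyc_s).1.
have lt_s : (size s < #|U|.+1)%N.
  by rewrite ltnS -(size_ham_cycle p) def_p size_cat leq_addr.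
have take_s : take (Ordinal lt_s) (ham_cycle p) = s by rewrite def_p take_size_cat.
apply: le_trans (le_bigmax _ _ p); rewrite -take_s.
by apply: le_bigmax_cond; rewrite take_s cyc_s e_s.
Qed.

Lemma Cw_le e M : 0 <= M ->
  (forall s, is_cycle s -> e \in cycle_edges s -> cycle_weight w s <= M) ->
  Cw w e <= M.
Proof.
move=> M_ge0 le_M; apply: bigmax_le => // p _.
by apply: bigmax_le => // k /andP[]; apply: le_M.
Qed.

Definition ham_heaviest := forall p,
  {in cycle_edges (ham_cycle p), forall e, Cw w e = cycle_weight w (ham_cycle p)}.

Lemma cycle_weight_induced a s :
  (forall u v, u != v -> w [set u; v] = (a u + a v) / 2) ->
  uniq s -> (1 < size s)%N -> cycle_weight w s = \sum_(v <- s) a v.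
Proof.
move=> wE us ns; rewrite /cycle_weight big_map.
rewrite (eq_big_seq (fun pr => (a pr.1 + a pr.2) / 2)); last first.
  by move=> pr /(zip_rot1_neq us ns) /wE.
rewrite -big_distrl big_split /= -(big_map fst xpredT a) -(big_map snd xpredT a).
rewrite -[map fst _]/(unzip1 _) -[map snd _]/(unzip2 _).
rewrite unzip1_zip ?unzip2_zip ?size_rot //.
rewrite (perm_big s (introT permPl (perm_rot 1 s))).
by rewrite mulrDl -splitr.
Qed.

Lemma Cw_induced a e : (2 < #|U|)%N -> induced_by w a -> is_edge e ->
  Cw w e = \sum_v a v.
Proof.
move=> U3 [a_ge0 wE] edge_e; apply/eqP; rewrite eq_le; apply/andP; split.
  apply: Cw_le => [|s /andP[us ns] _]; first exact: sumr_ge0.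
  rewrite (cycle_weight_induced wE) ?(ltnW ns) // big_uniq //=.
  by rewrite [X in _ <= X](bigID (mem s)) /= lerDl sumr_ge0.
have [p e_p] := ham_cycle_through edge_e.
apply: le_trans (cycle_weight_le_Cw (is_cycle_ham_cycle p U3) e_p).
rewrite (cycle_weight_induced wE) ?ham_cycle_uniq ?size_ham_cycle ?(ltnW U3) //.
by rewrite big_ham_cycle.
Qed.

Lemma induced_ham_heaviest a : (2 < #|U|)%N -> induced_by w a -> ham_heaviest.
Proof.
move=> U3 ind p e e_p; have U2 := ltnW U3.
rewrite (Cw_induced U3 ind); last first.
  by apply: cycle_edge_is_edge e_p; rewrite ?ham_cycle_uniq ?size_ham_cycle.
by rewrite (cycle_weight_induced ind.2) ?ham_cycle_uniq ?size_ham_cycle ?big_ham_cycle.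
Qed.

Section PositiveWeights.
Hypothesis w_gt0 : forall e, is_edge e -> 0 < w e.

Lemma cycle_weight_gt0 s : is_cycle s -> 0 < cycle_weight w s.
Proof.
case/andP=> us ns; have edges_s := cycle_edge_is_edge us (ltnW ns).
rewrite /cycle_weight; case def_E: (cycle_edges s) edges_s => [|e E] edges_s.
  by move: ns; rewrite -(size_cycle_edges s) def_E.
rewrite big_cons (lt_le_trans (w_gt0 (edges_s _ (mem_head _ _)))) // lerDl big_seq.
by apply: sumr_ge0 => f f_E; rewrite ltW // w_gt0 // edges_s // inE f_E orbT.
Qed.

Definition cycle_ratio s := \sum_(e <- cycle_edges s) w e / Cw w e.

Lemma cycle_ratio_term_le s e : is_cycle s -> e \in cycle_edges s ->
  w e / Cw w e <= w e / cycle_weight w s.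
Proof.
move=> cyc_s e_s; have W_gt0 := cycle_weight_gt0 cyc_s.
have w_e := w_gt0 (cycle_edge_is_edge (andP cyc_s).1 (ltnW (andP cyc_s).2) e_s).
rewrite ler_pM2l // lef_pV2 ?posrE ?cycle_weight_le_Cw //.
exact: lt_le_trans W_gt0 (cycle_weight_le_Cw cyc_s e_s).
Qed.

Lemma sum_div_cycle_weight s : is_cycle s ->
  \sum_(e <- cycle_edges s) w e / cycle_weight w s = 1.
Proof. by move=> cyc_s; rewrite -mulr_suml divff // gt_eqF // cycle_weight_gt0. Qed.

Lemma cycle_ratio_le1 s : is_cycle s -> cycle_ratio s <= 1.
Proof.
move=> cyc_s; rewrite /cycle_ratio -(sum_div_cycle_weight cyc_s) !big_seq.
by apply: ler_sum => e; apply: cycle_ratio_term_le.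
Qed.

Lemma cycle_ratio_eq1 s : is_cycle s ->
  cycle_ratio s = 1 <-> {in cycle_edges s, forall e, Cw w e = cycle_weight w s}.
Proof.
move=> cyc_s; split=> [ratio1 e e_s | Cw_s]; last first.
  by rewrite -(sum_div_cycle_weight cyc_s); apply: eq_big_seq => e /Cw_s ->.
have : \sum_(e <- cycle_edges s) (w e / cycle_weight w s - w e / Cw w e) == 0.
  by rewrite sumrB sum_div_cycle_weight // -/(cycle_ratio s) ratio1 subrr.
rewrite big_seq psumr_eq0 => [/allP/(_ e e_s)|f f_s]; last first.
  by rewrite subr_ge0 cycle_ratio_term_le.
have /andP[us ns] := cyc_s; have w_e := w_gt0 (cycle_edge_is_edge us (ltnW ns) e_s).
by rewrite e_s /= subr_eq0 => /eqP/(mulfI (lt0r_neq0 w_e))/invr_inj.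
Qed.

Lemma sum_edge_ratio_eq_iff : (2 < #|U|)%N ->
  \sum_(e | is_edge e) w e / Cw w e = (#|U| - 1)%:R / 2 <-> ham_heaviest.
Proof.
move=> U3; have [e0] : exists e0 : {set U}, e0 \in [set A : {set U} | #|A| == 2].
  by apply/card_gt0P; rewrite card_draws bin_gt0 ltnW.
rewrite inE => edge_e0; set N := ham_edge_count e0.
have N_mul := ham_edge_count_mul (ltnW U3) edge_e0.
have perm_gt0 : (0 < #|{perm U}|)%N by apply/card_gt0P; exists 1%g.
have N_gt0 : (0 < N)%N by move: N_mul perm_gt0; rewrite /N; nia.
have perm_card : (#|U| - 1)%:R / 2 *+ N = #|{perm U}|%:R :> R.
  by rewrite -mulr_natr mulrAC -natrM mulnC subn1 N_mul natrM mulrC mulKf ?pnatr_eq0.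
have sumE := sum_ham_cycle_edges (ltnW U3) (fun e => w e / Cw w e) edge_e0.
have ratio_le1 p :
    cycle_ratio (ham_cycle p) <= 1 ?= iff (cycle_ratio (ham_cycle p) == 1).
  exact/leif_eq/cycle_ratio_le1/is_cycle_ham_cycle.
transitivity (\sum_p cycle_ratio (ham_cycle p) = \sum_(p : {perm U}) 1).
  rewrite sumr_const -perm_card sumE.
  by split=> [-> // | /(pmulrnI N_gt0)].
rewrite (rwP eqP) (leif_sum (fun p _ => ratio_le1 p)).2.
split=> [/forallP all1 p | heaviest].
  exact/(cycle_ratio_eq1 (is_cycle_ham_cycle p U3))/eqP/all1.
by apply/forallP => p; apply/eqP/(cycle_ratio_eq1 (is_cycle_ham_cycle p U3))/heaviest.
Qed.

End PositiveWeights.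
End MaxCycleWeight.

Section FourPointCondition.
Variables (R : realType) (U : finType) (w : {set U} -> R).
Hypothesis four_point : forall x y u v : U, uniq [:: x; y; u; v] ->
  w [set x; y] + w [set u; v] = w [set x; u] + w [set y; v].

Definition triangle_apex (x y z : U) := w [set x; y] + w [set x; z] - w [set y; z].

Lemma triangle_apexC x y z : triangle_apex x y z = triangle_apex x z y.
Proof. by rewrite /triangle_apex (addrC (w [set x; y])) (setUC [set y]). Qed.

Lemma triangle_apex_shift x y z z' : uniq [:: x; y; z] -> z' \notin [:: x; y] ->
  triangle_apex x y z = triangle_apex x y z'.
Proof.
move=> xyz z'_xy; have [<- // | neq_zz'] := eqVneq z z'.
have : uniq [:: x; z; z'; y].
  move: xyz z'_xy; rewrite /= !inE !negb_or !andbT.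
  move=> /andP[/andP[xy xz] yz] /andP[z'x z'y].
  by rewrite xz (eq_sym x z') z'x xy neq_zz' (eq_sym z y) yz z'y.
move/four_point; rewrite /triangle_apex (setUC [set z']) (setUC [set z]); lra.
Qed.

Lemma triangle_apex_indep x y z y' z' : uniq [:: x; y; z] -> uniq [:: x; y'; z'] ->
  triangle_apex x y z = triangle_apex x y' z'.
Proof.
move=> /[dup] xyz /andP[]; rewrite !inE negb_or => /andP[xy _] _.
rewrite /= !inE !negb_or !andbT => /andP[/andP[xy' xz'] y'z'].
have y'_xz' : y' \notin [:: x; z'] by rewrite !inE negb_or eq_sym xy' y'z'.
have [z'y | z'y] := eqVneq z' y.
  by subst z'; rewrite [RHS]triangle_apexC; apply: triangle_apex_shift.
rewrite (@triangle_apex_shift _ _ _ z') ?inE ?negb_or 1?eq_sym ?xz' ?z'y //.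
rewrite triangle_apexC [RHS]triangle_apexC; apply: triangle_apex_shift => //.
by rewrite /= !inE negb_or xz' xy z'y.
Qed.

Definition vertex_weight x :=
  if [pick yz : U * U | uniq [:: x; yz.1; yz.2]] is Some (y, z)
  then triangle_apex x y z else 0.

Lemma vertex_weightE x y z : uniq [:: x; y; z] -> vertex_weight x = triangle_apex x y z.
Proof.
move=> xyz; rewrite /vertex_weight; case: pickP => [[y' z'] /= xy'z' | /(_ (y, z))].
  exact: triangle_apex_indep.
by rewrite xyz.
Qed.

Lemma four_point_induced : (2 < #|U|)%N ->
  forall u v, u != v -> w [set u; v] = (vertex_weight u + vertex_weight v) / 2.
Proof.
move=> U3 u v neq_uv; have [z /andP[zu zv]] := exists_third u v U3.
rewrite (@vertex_weightE u v z) ?(@vertex_weightE v u z); last 2 first.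
- by rewrite /= !inE negb_or eq_sym neq_uv eq_sym zv eq_sym zu.
- by rewrite /= !inE negb_or neq_uv eq_sym zu eq_sym zv.
rewrite /triangle_apex (setUC [set v] [set u]); lra.
Qed.

End FourPointCondition.

Section HeaviestHamiltonianCycles.
Variables (R : realType) (U : finType) (w : {set U} -> R).
Hypothesis heaviest : ham_heaviest w.

Lemma ham_heaviest_four_point x y u v : uniq [:: x; y; u; v] ->
  w [set x; y] + w [set u; v] = w [set x; u] + w [set y; v].
Proof.
move=> xyuv; have [p [rest def_p]] := ham_cycle_prefix xyuv.
have swap : perm_eq [:: x, u, y, v & rest] (ham_cycle p).
  by rewrite def_p perm_cons (perm_catCA [:: u] [:: y]).
have [q def_q] := ham_cycle_surj (etrans (perm_uniq swap) (ham_cycle_uniq p))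
  (etrans (perm_size swap) (size_ham_cycle p)).
have yu_p : [set y; u] \in cycle_edges (ham_cycle p) by rewrite def_p !inE eqxx !orbT.
have yu_q : [set y; u] \in cycle_edges (ham_cycle q).
  by rewrite def_q setUC !inE eqxx !orbT.
move: (heaviest yu_q); rewrite (heaviest yu_p) def_p def_q.
rewrite /cycle_weight /cycle_edges /=.
rewrite !big_cons (setUC [set u] [set y]); lra.
Qed.

Hypothesis U4 : (3 < #|U|)%N.

Lemma ham_heaviest_vertex_weight_ge0 x : 0 <= vertex_weight w x.
Proof.
have wE := four_point_induced ham_heaviest_four_point (ltnW U4).
set s := enum (predC1 x); have us : uniq s := enum_uniq _.
have cyc_s : is_cycle s by rewrite /is_cycle us -cardE cardC1 -subn1 ltn_subRL.
have ns := ltnW (andP cyc_s).2.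
have [e e_s] : exists e, e \in cycle_edges s.
  case: (cycle_edges s) (size_cycle_edges s) => [s0 | e E _].
    by move: ns; rewrite -s0.
  by exists e; rewrite mem_head.
have [p e_p] := ham_cycle_through (cycle_edge_is_edge us ns e_s).
have := cycle_weight_le_Cw w cyc_s e_s; rewrite (heaviest e_p).
rewrite !(cycle_weight_induced wE) ?ham_cycle_uniq ?size_ham_cycle ?(ltnW (ltnW U4)) //.
rewrite big_ham_cycle big_enum [X in _ <= X -> _](bigD1 x) //=.
by rewrite (eq_bigl (fun i => i != x)) ?lerDr.
Qed.

Lemma ham_heaviest_vertex_induced : vertex_induced w.
Proof.
exists (vertex_weight w); split; first exact: ham_heaviest_vertex_weight_ge0.
exact: four_point_induced ham_heaviest_four_point (ltnW U4).
Qed.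

End HeaviestHamiltonianCycles.

Unset Implicit Arguments.

Theorem proposition3p9 (R : realType) (U : finType) (r : nat)
  (hU : #|U| = r) (hr : (4 <= r)%N) (w : {set U} -> R)
  (hw : forall e : {set U}, is_edge e -> 0 < w e) :
  ((\sum_(e : {set U} | is_edge e) w e / Cw w e = (r - 1)%:R / 2)
     <-> vertex_induced w)
  /\ (forall a : U -> R, induced_by w a ->
        forall e : {set U}, is_edge e -> Cw w e = \sum_(v : U) a v).
Proof.
have U4 : (3 < #|U|)%N by rewrite hU.
split; last by move=> a ind e; apply: Cw_induced (ltnW U4) ind.
rewrite -hU (sum_edge_ratio_eq_iff hw (ltnW U4)); split => [heaviest | [a ind]].
  exact: ham_heaviest_vertex_induced.
exact: induced_ham_heaviest (ltnW U4) ind.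
Qed.
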